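(* For every limit-periodic potential $d\in\ell^\infty(\mathbb{Z})$, the topological group $\mathrm{hull}(d)$ is a procyclic group, i.e. it is isomorphic (as a topological group) to the inverse limit of an inverse system of finite cyclic groups.
   Context: $\sigma$ is the left shift on $\ell^\infty(\mathbb{Z})$ (sup norm), $(\sigma d)_n=d_{n+1}$, and $\mathrm{hull}(d)$ is the closure of $\{\sigma^k d:k\in\mathbb{Z}\}$. A potential is periodic if its shift orbit is finite, and limit-periodic if it lies in the $\ell^\infty$-closure of the periodic potentials. For limit-periodic $d$, $\mathrm{hull}(d)$ is compact and carries a unique topological group structure with identity $d$ such that $k\mapsto\sigma^k(d)$ is a homomorphism $\mathbb{Z}\to\mathrm{hull}(d)$. An inverse limit of an inverse system $(X_i,\phi_{ij})$ of topological groups (continuous homomorphisms $\phi_{ij}:X_j\to X_i$ for $i\le j$ in a directed set, with $\phi_{ii}=\mathrm{id}$, $\phi_{ij}\phi_{jk}=\phi_{ik}$) is a topological group $X$ with compatible continuous homomorphisms $\phi_i:X\to X_i$ ($\phi_{ij}\phi_j=\phi_i$) universal among such families; finite cyclic groups carry the discrete topology. *)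

From mathcomp Require Import all_boot all_order all_algebra.
From mathcomp Require Import reals.
Set Implicit Arguments. Unset Strict Implicit. Unset Printing Implicit Defensive.
Import Order.TTheory GRing.Theory Num.Theory.
Local Open Scope ring_scope.

Section Defs.
Variable R : realType.

Definition seqZ := int -> R.

Definition bounded_seq (d : seqZ) : Prop := exists M : R, forall n, `|d n| <= M.

Definition close (e : R) (x y : seqZ) : Prop := forall n, `|x n - y n| <= e.

Definition shift (k : int) (d : seqZ) : seqZ := fun n => d (n + k).

Definition periodic (d : seqZ) : Prop :=
  exists (N : nat) (f : 'I_N -> seqZ), forall k : int, exists i, shift k d = f i.

Definition limit_periodic (d : seqZ) : Prop :=
  forall e : R, 0 < e -> exists p, periodic p /\ close e d p.

Definition in_hull (d x : seqZ) : Prop :=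
  forall e : R, 0 < e -> exists k : int, close e x (shift k d).

(* (mul, inv) is a topological group structure on hull(d) (with the
   l^oo-subspace topology), with identity d, such that k |-> sigma^k d is a
   group homomorphism Z -> hull(d). *)
Definition hull_topgroup (d : seqZ) (mul : seqZ -> seqZ -> seqZ)
  (inv : seqZ -> seqZ) : Prop :=
  (forall x y, in_hull d x -> in_hull d y -> in_hull d (mul x y)) /\
      (forall x, in_hull d x -> in_hull d (inv x)) /\
      (forall x y z, in_hull d x -> in_hull d y -> in_hull d z ->
         mul x (mul y z) = mul (mul x y) z) /\
      (forall x, in_hull d x -> mul d x = x /\ mul x d = x) /\
      (forall x, in_hull d x -> mul (inv x) x = d /\ mul x (inv x) = d) /\
      (forall k l : int, mul (shift k d) (shift l d) = shift (k + l) d) /\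
      (forall x y, in_hull d x -> in_hull d y -> forall e : R, 0 < e ->
         exists2 dl : R, 0 < dl & forall x' y', in_hull d x' -> in_hull d y' ->
           close dl x x' -> close dl y y' -> close e (mul x y) (mul x' y')) /\
    (forall x, in_hull d x -> forall e : R, 0 < e ->
         exists2 dl : R, 0 < dl & forall x', in_hull d x' ->
           close dl x x' -> close e (inv x) (inv x')).

End Defs.

(* An inverse system of finite cyclic groups Z/(m i + 1) (discrete topology)
   over a directed (preordered, nonempty) index set (I, le); the transition
   maps phi i j : Z/(m j + 1) -> Z/(m i + 1) are used for le i j. *)
Definition cyclic_inverse_system (I : Type) (le : I -> I -> Prop) (m : I -> nat)
  (phi : forall i j : I, 'I_(m j).+1 -> 'I_(m i).+1) : Prop :=
  inhabited I /\
      (forall i, le i i) /\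
      (forall i j k, le i j -> le j k -> le i k) /\
      (forall i j, exists k, le i k /\ le j k) /\
      (forall i (x : 'I_(m i).+1), phi i i x = x) /\
      (forall i j k (x : 'I_(m k).+1), le i j -> le j k ->
         phi i j (phi j k x) = phi i k x) /\
    (forall i j (x y : 'I_(m j).+1), le i j ->
         phi i j (x + y)%R = (phi i j x + phi i j y)%R).

(* Elements of the inverse limit: compatible families in the product
   (concrete model of the inverse limit; product topology). *)
Definition in_inv_lim (I : Type) (le : I -> I -> Prop) (m : I -> nat)
  (phi : forall i j : I, 'I_(m j).+1 -> 'I_(m i).+1)
  (x : forall i, 'I_(m i).+1) : Prop :=
  forall i j, le i j -> phi i j (x j) = x i.

Definition topgroup_iso (R : realType) (d : seqZ R) (mul : seqZ R -> seqZ R -> seqZ R)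
  (I : Type) (le : I -> I -> Prop) (m : I -> nat)
  (phi : forall i j : I, 'I_(m j).+1 -> 'I_(m i).+1)
  (Phi : seqZ R -> forall i, 'I_(m i).+1) : Prop :=
  (forall x, in_hull d x -> in_inv_lim le phi (Phi x)) /\
      (forall x y, in_hull d x -> in_hull d y -> (forall i, Phi x i = Phi y i) -> x = y) /\
      (forall z, in_inv_lim le phi z -> exists2 x, in_hull d x & forall i, Phi x i = z i) /\
      (forall x y, in_hull d x -> in_hull d y -> forall i,
         Phi (mul x y) i = (Phi x i + Phi y i)%R) /\
      (* continuity of Phi (each coordinate locally constant) *)
      (forall x, in_hull d x -> forall i, exists2 dl : R, 0 < dl &
         forall y, in_hull d y -> close dl x y -> Phi y i = Phi x i) /\
    (* continuity of Phi^{-1}: basic product-topology neighbourhoods *)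
      (forall x, in_hull d x -> forall e : R, 0 < e ->
         exists (N : nat) (f : 'I_N -> I), forall y, in_hull d y ->
           (forall j, Phi y (f j) = Phi x (f j)) -> close e x y).

(* An index q > 0 is admissible when "k mod q" is uniformly continuous along the
   orbit k |-> sigma^k d, so that it extends to a continuous homomorphism
   hull(d) -> Z/q; admissible moduli are closed under lcm, hence form a directed
   system under divisibility, and the hull maps into the inverse limit of the Z/q.
   The map is injective with continuous inverse because, for every e > 0, some
   admissible q has all its multiples as e-almost periods of d: if d is e/4-close
   to a p of period q0, the residues r mod q0 that are limits of return times of d
   form a subgroup qZ of Z containing q0, and finitely many residues outside it
   are separated from d by a uniform distance.  Surjectivity follows from
   completeness of l^oo along a cofinal sequence of admissible moduli. *)

From mathcomp Require Import all_boot all_order all_algebra.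
From mathcomp Require Import reals.
From mathcomp Require Import boolp classical_sets.
From mathcomp Require Import ring lra.
Set Implicit Arguments. Unset Strict Implicit. Unset Printing Implicit Defensive.
Import Order.TTheory GRing.Theory Num.Theory.
Local Open Scope ring_scope.

Section Shifts.
Variable R : realType.
Implicit Types (x y z p : seqZ R) (a b e : R).

Lemma shiftD (k l : int) x : shift k (shift l x) = shift (l + k) x.
Proof. by apply: funext => n; rewrite /shift -addrA (addrC k l). Qed.

Lemma shift0 x : shift 0 x = x.
Proof. by apply: funext => n; rewrite /shift addr0. Qed.

Lemma close_shift e (k : int) x y : close e x y -> close e (shift k x) (shift k y).
Proof. by move=> h n; exact: h. Qed.

Lemma close_refl e x : 0 <= e -> close e x x.
Proof. by move=> h n; rewrite subrr normr0. Qed.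

Lemma close_sym e x y : close e x y -> close e y x.
Proof. by move=> h n; rewrite distrC. Qed.

Lemma close_trans a b x y z : close a x y -> close b y z -> close (a + b) x z.
Proof. by move=> h1 h2 n; apply: le_trans (ler_distD (y n) _ _) _; exact: lerD. Qed.

Lemma close_le a b x y : a <= b -> close a x y -> close b x y.
Proof. by move=> ab h n; apply: le_trans (h n) ab. Qed.

Lemma close_eq x y : (forall e, 0 < e -> close e x y) -> x = y.
Proof.
move=> xy; apply: funext => t; apply/eqP; rewrite -subr_eq0 -normr_eq0.
rewrite eq_le normr_ge0 andbT leNgt; apply/negP => pos.
have := xy _ (divr_gt0 pos (ltr0Sn _ 1)) t; lra.
Qed.

Lemma close_shift_subr e (k k' : int) x :
  close e (shift k x) (shift k' x) <-> close e x (shift (k' - k) x).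
Proof.
split=> [/(close_shift (- k))|/(close_shift k)]; last by rewrite shiftD subrK.
by rewrite !shiftD subrr shift0.
Qed.

Lemma periodic_period p : periodic p -> exists q : nat, (0 < q)%N /\ shift q%:Z p = p.
Proof.
case=> N [f orbit_f]; apply: contrapT => aperiodic.
have [g gP] := @choice _ _ (fun (i : 'I_N.+1) j => shift (val i)%:Z p = f j)
  (fun i => orbit_f _).
suff /leq_card : injective g by rewrite !card_ord ltnn.
have shift_inj (u v : nat) : (u < v)%N -> shift u%:Z p <> shift v%:Z p.
  move=> uv euv; apply: aperiodic; exists (v - u)%N; rewrite subn_gt0 uv.
  split=> //; rewrite -subzn ?(ltnW uv) //.
  by move: (congr1 (shift (- u%:Z)) euv); rewrite !shiftD subrr shift0 => /esym.
move=> i j gij; have eij := etrans (gP i) (etrans (congr1 f gij) (esym (gP j))).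
case: (ltngtP (val i) (val j)) => [lt|lt|/val_inj //].
  by case: (shift_inj _ _ lt eij).
by case: (shift_inj _ _ lt (esym eij)).
Qed.

Lemma shift_period_dvd p (q : nat) (k k' : int) :
  shift q%:Z p = p -> (q%:Z %| k' - k)%Z -> shift k p = shift k' p.
Proof.
move=> qp /divzK kk'; rewrite -[k'](subrK k) -shiftD -kk'.
suff mulP (j : int) : shift (j * q%:Z) p = p by rewrite mulP.
have natP (n : nat) : shift (n%:Z * q%:Z) p = p.
  elim: n => [|n IH]; first by rewrite mul0r shift0.
  by rewrite intS mulrDl mul1r addrC -shiftD IH qp.
case: j => n; first exact: natP.
by rewrite NegzE mulNr -[in LHS](natP n.+1) shiftD subrr shift0.
Qed.

End Shifts.

Lemma int_subgroup_dvd (B : int -> Prop) :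
  (forall a b, B a -> B b -> B (a - b)) -> (exists n : nat, (0 < n)%N /\ B n%:Z) ->
  exists q : nat, (0 < q)%N /\ forall r, B r <-> (q%:Z %| r)%Z.
Proof.
move=> BB [n0 [n0_gt0 Bn0]].
have B0 : B 0 by rewrite -(subrr n0%:Z); exact: BB.
have BN a : B a -> B (- a) by move=> Ba; rewrite -sub0r; exact: BB.
have BD a b : B a -> B b -> B (a + b) by move=> Ba Bb; rewrite -[b]opprK; exact/BB/BN.
have BMn a (k : nat) : B a -> B (a * k%:Z).
  by move=> Ba; elim: k => [|k IH]; rewrite ?mulr0 // intS mulrDr mulr1; exact: BD.
have BM a (j : int) : B a -> B (a * j).
  by move=> Ba; case: j => k; [exact: BMn | rewrite NegzE mulrN; exact/BN/BMn].
have exB : exists n : nat, `[< (0 < n)%N /\ B n%:Z >] by exists n0; exact/asboolP.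
case: (ex_minnP exB) => q /asboolP[q_gt0 Bq] q_min.
exists q; split=> // r; split=> [Br | /divzK <-]; last by rewrite mulrC; exact: BM.
have qz_neq0 : q%:Z != 0 by rewrite eqz_nat -lt0n.
have [s rq] : exists s : nat, (r %% q%:Z)%Z = s%:Z.
  by exists (absz (r %% q%:Z)%Z); rewrite gez0_abs // modz_ge0.
have Bs : B s%:Z.
  have -> : s%:Z = r + q%:Z * - (r %/ q%:Z)%Z by rewrite -rq {2}(divz_eq r q%:Z); ring.
  exact: BD Br (BM _ _ Bq).
apply/dvdz_mod0P; rewrite rq; case: s rq Bs => [//|s] rq Bs.
have := q_min s.+1 (asboolT (conj (ltn0Sn s) Bs)).
by rewrite leqNgt -ltz_nat -rq ltz_pmod ?ltz_nat.
Qed.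

Lemma exists_pos_uniform (R : realType) (P : nat -> R -> Prop) (n : nat) :
  (forall r a b, a <= b -> P r b -> P r a) ->
  (forall r, (r < n)%N -> exists2 a, 0 < a & P r a) ->
  exists2 a, 0 < a & forall r, (r < n)%N -> P r a.
Proof.
move=> P_le; elim: n => [|n IH] Pn; first by exists 1.
have [a a_gt0 Pa] := IH (fun r rn => Pn r (ltnW rn)).
have [b b_gt0 Pb] := Pn n (ltnSn n).
exists (Num.min a b) => [|r]; first by rewrite lt_min a_gt0 b_gt0.
rewrite ltnS leq_eqVlt => /orP[/eqP -> | rn].
  by apply: P_le Pb; rewrite ge_min lexx orbT.
by apply: P_le (Pa r rn); rewrite ge_min lexx.
Qed.

Section AlmostPeriods.
Variable R : realType.
Variable d : seqZ R.

Definition mod_continuous (q : nat) : Prop := (0 < q)%N /\ exists2 dl : R, 0 < dl &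
  forall k k' : int, close dl (shift k d) (shift k' d) -> (q%:Z %| k' - k)%Z.

Definition almost_period (e : R) (q : nat) : Prop :=
  forall k k' : int, (q%:Z %| k' - k)%Z -> close e (shift k d) (shift k' d).

Lemma mod_continuous1 : mod_continuous 1.
Proof. by split=> //; exists 1 => // k k' _; exact: dvd1z. Qed.

Lemma mod_continuous_lcm a b :
  mod_continuous a -> mod_continuous b -> mod_continuous (lcmn a b).
Proof.
case=> a_gt0 [da da_gt0 Ha] [b_gt0 [db db_gt0 Hb]].
split; first by rewrite lcmn_gt0 a_gt0 b_gt0.
exists (Num.min da db) => [|k k' kk']; first by rewrite lt_min da_gt0 db_gt0.
by rewrite dvdz_lcm Ha ?Hb //; apply: close_le kk'; rewrite ge_min lexx ?orbT.
Qed.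

Lemma almost_period_dvd e a b : almost_period e a -> (a %| b)%N -> almost_period e b.
Proof. by move=> Ha ab k k' bk; apply: Ha; apply: dvdz_trans bk; rewrite dvdzE. Qed.

Section NearReturns.
Variable q0 : nat.
Hypothesis q0_gt0 : (0 < q0)%N.

Definition near_return (r : int) : Prop := forall eta : R, 0 < eta ->
  exists s : int, (q0%:Z %| s - r)%Z /\ close eta d (shift s d).

Lemma near_return_q0 : near_return q0%:Z.
Proof.
move=> eta eta_gt0; exists 0; rewrite sub0r rpredN dvdzz shift0.
by split=> //; exact: close_refl (ltW eta_gt0).
Qed.

Lemma near_returnB r1 r2 : near_return r1 -> near_return r2 -> near_return (r1 - r2).
Proof.
move=> B1 B2 eta eta_gt0; have eta2_gt0 : 0 < eta / 2 by lra.
have [s1 [q0s1 ds1]] := B1 _ eta2_gt0; have [s2 [q0s2 ds2]] := B2 _ eta2_gt0.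
exists (s1 - s2); split.
  have -> : s1 - s2 - (r1 - r2) = (s1 - r1) - (s2 - r2) by ring.
  exact: rpredB.
have /close_shift_subr := close_trans (close_sym ds2) ds1.
by apply: close_le; lra.
Qed.

Lemma near_return_modz r : near_return (r %% q0%:Z)%Z -> near_return r.
Proof.
move=> Br eta eta_gt0; have [s [q0s ds]] := Br _ eta_gt0; exists s; split=> //.
have -> : s - r = (s - (r %% q0%:Z)%Z) - (r - (r %% q0%:Z)%Z) by ring.
by rewrite rpredB // -eqz_mod_dvd modz_mod.
Qed.

Lemma near_return_open : exists2 dl : R, 0 < dl &
  forall s : int, close dl d (shift s d) -> near_return s.
Proof.
pose P r dl := near_return r%:Z \/
  forall s : int, (q0%:Z %| s - r%:Z)%Z -> ~ close dl d (shift s d).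
have [|r _|dl dl_gt0 Pdl] := @exists_pos_uniform R P q0.
- move=> r a b ab [Br|Pb]; [by left | right=> s q0s /(close_le ab)].
  exact: Pb.
- case: (pselect (near_return r%:Z)) => [Br|nBr]; first by exists 1 => //; left.
  apply: contrapT => nP; apply: nBr => eta eta_gt0; apply: contrapT => nclose.
  by apply: nP; exists eta => //; right=> s q0s ds; apply: nclose; exists s.
exists dl => // s ds; apply: near_return_modz.
have [r rE] : exists r : nat, (s %% q0%:Z)%Z = r%:Z.
  by exists (absz (s %% q0%:Z)%Z); rewrite gez0_abs // modz_ge0 // eqz_nat -lt0n.
have rq0 : (r < q0)%N by rewrite -ltz_nat -rE ltz_pmod ?ltz_nat.
rewrite rE; case: (Pdl r rq0) => // /(_ s); rewrite -rE -eqz_mod_dvd modz_mod.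
by move/(_ (eqxx _)).
Qed.

End NearReturns.

Lemma exists_mod_continuous_almost_period e : limit_periodic d -> 0 < e ->
  exists q, mod_continuous q /\ almost_period e q.
Proof.
move=> lp e_gt0; have e4_gt0 : 0 < e / 4 by lra.
have [p [/periodic_period[q0 [q0_gt0 q0p]] dp]] := lp _ e4_gt0.
have q0_ap : almost_period (e / 2) q0.
  move=> k k' /(shift_period_dvd q0p) pkk'.
  have := close_shift k dp; rewrite pkk' => /close_trans/(_ (close_sym (close_shift k' dp))).
  by apply: close_le; lra.
have [|q [q_gt0 Bq]] := @int_subgroup_dvd (near_return q0) (@near_returnB q0).
  by exists q0; split=> //; exact: near_return_q0.
exists q; split.
  split=> //; have [dl dl_gt0 open] := near_return_open q0_gt0.
  by exists dl => // k k' /close_shift_subr/open/Bq.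
move=> k k' /Bq ret; apply/close_shift_subr.
have [s [q0s ds]] := ret (e / 2) (divr_gt0 e_gt0 (ltr0Sn _ 1)).
have := close_trans ds (q0_ap s (k' - k) _); rewrite -opprB rpredN => /(_ q0s).
by apply: close_le; lra.
Qed.

End AlmostPeriods.

Definition residue (n : nat) (k : int) : 'I_n.+1 := inZp (absz (k %% n.+1%:Z)%Z).

Lemma residue_val n k : (val (residue n k))%:Z = (k %% n.+1%:Z)%Z.
Proof.
have mod_ge0 : 0 <= (k %% n.+1%:Z)%Z by rewrite modz_ge0.
by rewrite /= modn_small ?gez0_abs // -ltz_nat gez0_abs // ltz_pmod.
Qed.

Lemma residue_eq n k k' : residue n k = residue n k' <-> (n.+1%:Z %| k' - k)%Z.
Proof.
rewrite -eqz_mod_dvd eq_sym -!residue_val eqz_nat.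
by split=> [-> // | /eqP/val_inj].
Qed.

Lemma residueD n k l : residue n (k + l) = residue n k + residue n l.
Proof.
apply: val_inj; apply/eqP; rewrite -eqz_nat.
have -> : val (residue n k + residue n l) = ((residue n k + residue n l) %% n.+1)%N by [].
by rewrite -modz_nat PoszD !residue_val modzDm.
Qed.

Lemma residue_nat n (a : nat) : residue n a%:Z = inZp a.
Proof. by apply: val_inj => /=; rewrite modz_nat /= modn_mod. Qed.

Lemma inZp_residue n n' k : (n.+1 %| n'.+1)%N ->
  (inZp (val (residue n' k)) : 'I_n.+1) = residue n k.
Proof.
move=> nn'; apply: val_inj; apply/eqP; rewrite -eqz_nat residue_val /= -modz_nat.
rewrite residue_val eqz_mod_dvd; apply: (@dvdz_trans n'.+1%:Z).
  by rewrite dvdzE.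
by rewrite -eqz_mod_dvd modz_mod.
Qed.

Section CauchyLimit.
Context {R : realType}.

Definition inv_succ (n : nat) : R := n.+1%:R^-1.

Lemma inv_succ_gt0 n : 0 < inv_succ n.
Proof. by rewrite invr_gt0 ltr0Sn. Qed.

Lemma inv_succ_le m n : (m <= n)%N -> inv_succ n <= inv_succ m.
Proof. by move=> mn; rewrite lef_pV2 ?posrE ?ltr0Sn // ler_nat ltnS. Qed.

Lemma exists_inv_succ_le e : 0 < e -> exists n, inv_succ n <= e.
Proof.
move=> e_gt0; exists (Num.Def.trunc e^-1).
rewrite /inv_succ -[e in _ <= e]invrK lef_pV2 ?posrE ?invr_gt0 ?ltr0Sn //.
exact: ltW (truncnS_gt _).
Qed.

Lemma close_cauchy_limit (u : nat -> seqZ R) :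
  (forall m n, (m <= n)%N -> close (inv_succ m) (u m) (u n)) ->
  exists x, forall n, close (inv_succ n) x (u n).
Proof.
move=> cauchy.
have low_up t m n : u m t - inv_succ m <= u n t + inv_succ n.
  have := inv_succ_gt0 m; have := inv_succ_gt0 n.
  case: (leqP m n) => [/cauchy/(_ t)|/ltnW/cauchy/(_ t)];
    by rewrite ler_norml => /andP[? ?]; lra.
exists (fun t => sup (range (fun n => u n t - inv_succ n))) => n t.
have sup_ge : u n t - inv_succ n <= sup (range (fun n => u n t - inv_succ n)).
  apply: ub_le_sup; last by exists n.
  by exists (u 0%N t + inv_succ 0) => _ [m _ <-]; exact: low_up.
have sup_le : sup (range (fun n => u n t - inv_succ n)) <= u n t + inv_succ n.
  apply: ge_sup => [|_ [m _ <-]]; last exact: low_up.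
  by exists (u 0%N t - inv_succ 0); exists 0%N.
by rewrite ler_norml; apply/andP; split; lra.
Qed.

End CauchyLimit.

Section HullResidues.
Variable R : realType.
Variable d : seqZ R.

Definition cyc_index := {n : nat | mod_continuous d n.+1}.

Definition cyc_le (i j : cyc_index) : Prop := ((sval i).+1 %| (sval j).+1)%N.

Definition cyc_map (i j : cyc_index) (x : 'I_(sval j).+1) : 'I_(sval i).+1 := inZp x.

Lemma cyclic_inverse_system_cyc : cyclic_inverse_system cyc_le cyc_map.
Proof.
do !split.
- exact: exist _ 0%N (mod_continuous1 d).
- by move=> i; exact: dvdnn.
- by move=> i j k; exact: dvdn_trans.
- move=> i j; have lcm_gt0 : (0 < lcmn (sval i).+1 (sval j).+1)%N by rewrite lcmn_gt0.
  have ij : mod_continuous d (lcmn (sval i).+1 (sval j).+1).-1.+1.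
    by rewrite prednK //; exact: mod_continuous_lcm (svalP i) (svalP j).
  exists (exist (fun n => mod_continuous d n.+1) _ ij); rewrite /cyc_le /= prednK //.
  by split; [exact: dvdn_lcml | exact: dvdn_lcmr].
- by move=> i x; apply: val_inj => /=; rewrite modn_small.
- by move=> i j k x ij _; apply: val_inj => /=; rewrite modn_dvdm.
- by move=> i j x y ij; apply: val_inj => /=; rewrite modn_dvdm // modnDm.
Qed.

Definition radius (i : cyc_index) : R := s2val (cid2 (svalP i).2).

Lemma radius_gt0 i : 0 < radius i.
Proof. by rewrite /radius; case: cid2. Qed.

Lemma radius_dvd i (k k' : int) :
  close (radius i) (shift k d) (shift k' d) -> ((sval i).+1%:Z %| k' - k)%Z.
Proof. by rewrite /radius; case: cid2 => /= dl _; exact. Qed.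

(* [ord0] is a junk value, used only off the hull. *)
Definition hull_residue (x : seqZ R) (i : cyc_index) : 'I_(sval i).+1 :=
  match pselect (exists k : int, close (radius i / 3) x (shift k d)) with
  | left near => residue (sval i) (projT1 (cid near))
  | right _ => ord0
  end.

Lemma hull_residue_shift x i k :
  close (radius i / 3) x (shift k d) -> hull_residue x i = residue (sval i) k.
Proof.
move=> xk; rewrite /hull_residue; case: pselect => [near|[]]; last by exists k.
case: cid => k0 /= xk0; apply/residue_eq/radius_dvd.
have := radius_gt0 i; have := close_trans (close_sym xk0) xk.
by move=> h r_gt0; apply: close_le h; lra.
Qed.

Lemma in_hull_shift k : in_hull d (shift k d).
Proof. by move=> e e_gt0; exists k; exact: close_refl (ltW e_gt0). Qed.

Lemma in_hull_near2 x a b : in_hull d x -> 0 < a -> 0 < b ->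
  exists k, close a x (shift k d) /\ close b x (shift k d).
Proof.
move=> hx a_gt0 b_gt0; have [|k xk] := hx (Num.min a b); first by rewrite lt_min a_gt0 b_gt0.
by exists k; split; apply: close_le xk; rewrite ge_min lexx ?orbT.
Qed.

Lemma hull_residue_compat x : in_hull d x -> in_inv_lim cyc_le cyc_map (hull_residue x).
Proof.
move=> hx i j ij; have third_gt0 l : 0 < radius l / 3 by have := radius_gt0 l; lra.
have [k [xki xkj]] := in_hull_near2 hx (third_gt0 i) (third_gt0 j).
by rewrite (hull_residue_shift xki) (hull_residue_shift xkj) /cyc_map inZp_residue.
Qed.

Lemma hull_residue_locally_constant x i : in_hull d x -> exists2 dl : R, 0 < dl &
  forall y, close dl x y -> hull_residue y i = hull_residue x i.
Proof.
move=> hx; have r_gt0 := radius_gt0 i; have sixth_gt0 : 0 < radius i / 6 by lra.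
exists (radius i / 6) => // y xy; have [k xk] := hx _ sixth_gt0.
rewrite (hull_residue_shift (close_le _ xk)); last lra.
by rewrite (hull_residue_shift (close_le _ (close_trans (close_sym xy) xk))) //; lra.
Qed.

Lemma hull_residue_mul mul inv : hull_topgroup d mul inv -> forall x y,
  in_hull d x -> in_hull d y -> forall i,
  hull_residue (mul x y) i = hull_residue x i + hull_residue y i.
Proof.
case=> _ [_ [_ [_ [_ [mul_shift [mul_cont _]]]]]] x y hx hy i.
have third_gt0 : 0 < radius i / 3 by have := radius_gt0 i; lra.
have [dl dl_gt0 mulC] := mul_cont x y hx hy _ third_gt0.
have [k [xk xki]] := in_hull_near2 hx dl_gt0 third_gt0.
have [l [yl yli]] := in_hull_near2 hy dl_gt0 third_gt0.
have := mulC _ _ (in_hull_shift k) (in_hull_shift l) xk yl.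
rewrite mul_shift => /hull_residue_shift ->.
by rewrite (hull_residue_shift xki) (hull_residue_shift yli) residueD.
Qed.

Section LimitPeriodic.
Hypothesis lp : limit_periodic d.

Lemma hull_residue_separates x e : in_hull d x -> 0 < e ->
  exists i, forall y, in_hull d y -> hull_residue y i = hull_residue x i -> close e x y.
Proof.
move=> hx e_gt0; have third_gt0 : 0 < e / 3 by lra.
have [q [qC q_ap]] := exists_mod_continuous_almost_period lp third_gt0.
have qC' : mod_continuous d q.-1.+1 by rewrite prednK ?qC.1.
exists (exist _ q.-1 qC') => y hy.
have r_gt0 : 0 < radius (exist _ q.-1 qC') / 3 by have := radius_gt0 (exist _ q.-1 qC'); lra.
have [k [xk xki]] := in_hull_near2 hx third_gt0 r_gt0.
have [l [yl yli]] := in_hull_near2 hy third_gt0 r_gt0.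
rewrite (hull_residue_shift xki) (hull_residue_shift yli) => /residue_eq.
rewrite /= prednK ?qC.1 // => /q_ap kl.
have := close_trans (close_trans xk (close_sym kl)) (close_sym yl).
by apply: close_le; lra.
Qed.

Lemma hull_residue_inj x y : in_hull d x -> in_hull d y ->
  (forall i, hull_residue x i = hull_residue y i) -> x = y.
Proof.
move=> hx hy xy; apply: close_eq => e e_gt0.
have [i sep] := hull_residue_separates hx e_gt0; exact: sep y hy (esym (xy i)).
Qed.

Definition ap_modulus (n : nat) : nat :=
  projT1 (cid (exists_mod_continuous_almost_period lp (inv_succ_gt0 n))).

Lemma ap_modulusP n :
  mod_continuous d (ap_modulus n) /\ almost_period d (inv_succ n) (ap_modulus n).
Proof. by rewrite /ap_modulus; case: cid. Qed.

(* Absorbing [n] itself when it is admissible makes the sequence cofinal. *)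
Fixpoint cofinal_modulus (n : nat) : nat :=
  if n is n'.+1 then
    lcmn (lcmn (cofinal_modulus n') (ap_modulus n))
      (if `[< mod_continuous d n >] then n else 1)
  else ap_modulus 0.

Lemma cofinal_modulus_continuous n : mod_continuous d (cofinal_modulus n).
Proof.
elim: n => [|n IH]; first exact: (ap_modulusP 0).1.
apply: mod_continuous_lcm; first exact: mod_continuous_lcm IH (ap_modulusP _).1.
by case: ifP => [/asboolP //|_]; exact: mod_continuous1.
Qed.

Lemma cofinal_modulus_almost_period n :
  almost_period d (inv_succ n) (cofinal_modulus n).
Proof.
apply: almost_period_dvd (ap_modulusP n).2 _; case: n => [|n] //=.
exact: dvdn_trans (dvdn_lcmr _ _) (dvdn_lcml _ _).
Qed.

Lemma cofinal_modulus_dvd m n : (m <= n)%N -> (cofinal_modulus m %| cofinal_modulus n)%N.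
Proof.
elim: n => [|n IH]; first by rewrite leqn0 => /eqP ->.
rewrite leq_eqVlt => /orP [/eqP -> //|/IH mn]; apply: dvdn_trans mn _.
exact: dvdn_trans (dvdn_lcml _ _) (dvdn_lcml _ _).
Qed.

Lemma dvd_cofinal_modulus q n : mod_continuous d q -> (q <= n)%N ->
  (q %| cofinal_modulus n)%N.
Proof.
move=> qC qn; apply: dvdn_trans (cofinal_modulus_dvd qn); case: q qC {qn} => [[]//|q] qC.
by rewrite /= ifT ?dvdn_lcmr //; exact/asboolP.
Qed.

Definition cofinal_index (n : nat) : cyc_index :=
  exist _ (cofinal_modulus n).-1
    (eq_ind_r _ (cofinal_modulus_continuous n) (prednK (cofinal_modulus_continuous n).1)).

Lemma cofinal_indexE n : (sval (cofinal_index n)).+1 = cofinal_modulus n.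
Proof. by rewrite /= prednK // (cofinal_modulus_continuous n).1. Qed.

Lemma hull_residue_surj z : in_inv_lim cyc_le cyc_map z ->
  exists2 x, in_hull d x & forall i, hull_residue x i = z i.
Proof.
move=> zc; pose kk n : int := (val (z (cofinal_index n)))%:Z.
have kk_cong m n : (m <= n)%N -> ((cofinal_modulus m)%:Z %| kk n - kk m)%Z.
  move=> mn; have le_mn : cyc_le (cofinal_index m) (cofinal_index n).
    by rewrite /cyc_le !cofinal_indexE cofinal_modulus_dvd.
  rewrite /kk -(zc _ _ le_mn) /cyc_map -residue_nat residue_val.
  by rewrite (cofinal_indexE m) -eqz_mod_dvd modz_mod.
have [x xlim] := @close_cauchy_limit _ (fun n => shift (kk n) d)
  (fun m n mn => cofinal_modulus_almost_period (kk_cong m n mn)).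
exists x => [e e_gt0 | i].
  by have [n ne] := exists_inv_succ_le e_gt0; exists (kk n); exact: close_le ne (xlim n).
have r_gt0 : 0 < radius i / 3 by have := radius_gt0 i; lra.
have [n1 n1r] := exists_inv_succ_le r_gt0; pose n := maxn n1 (sval i).+1.
have le_in : cyc_le i (cofinal_index n).
  by rewrite /cyc_le cofinal_indexE; exact: dvd_cofinal_modulus (svalP i) (leq_maxr _ _).
rewrite (hull_residue_shift (close_le _ (xlim n))); last first.
  exact: le_trans (inv_succ_le (leq_maxl _ _)) n1r.
by rewrite -(zc _ _ le_in) /kk residue_nat.
Qed.

End LimitPeriodic.
End HullResidues.

Theorem theorem4p9 (R : realType) (d : seqZ R)
  (mul : seqZ R -> seqZ R -> seqZ R) (inv : seqZ R -> seqZ R) :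
  bounded_seq d -> limit_periodic d -> hull_topgroup d mul inv ->
  exists (I : Type) (le : I -> I -> Prop) (m : I -> nat)
         (phi : forall i j : I, 'I_(m j).+1 -> 'I_(m i).+1),
    cyclic_inverse_system le phi /\
    exists Phi : seqZ R -> forall i, 'I_(m i).+1, topgroup_iso d mul le phi Phi.
Proof.
move=> _ lp hG.
exists (cyc_index d), (@cyc_le R d), (fun i => sval i), (@cyc_map R d).
split; first exact: cyclic_inverse_system_cyc.
exists (@hull_residue R d); do !split.
- exact: hull_residue_compat.
- exact: hull_residue_inj.
- exact: hull_residue_surj.
- exact: hull_residue_mul hG.
- move=> x hx i; have [dl dl_gt0 loc] := hull_residue_locally_constant i hx.
  by exists dl => // y _; exact: loc.
- move=> x hx e e_gt0; have [i sep] := hull_residue_separates lp hx e_gt0.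
  by exists 1%N, (fun _ => i) => y hy /(_ ord0); exact: sep.
Qed.
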